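(* Let $p$ be a prime. Let $G=P\times A$, where $P$ is a finite non-abelian $p$-group and $A$ is a non-trivial finite abelian group of order coprime to $p$. Let $H=P_1\times X$ be a finite nilpotent group, where $P_1$ is a non-abelian $p$-group and $X$ is a group with $\gcd(p,|X|)=1$. Suppose that $\Gamma_G$ and $\Gamma_H$ are irregular and $\Gamma_G\cong\Gamma_H$. Then $|G|=|H|$.
   Context: For a non-abelian group $G$ with center $Z(G)$, the non-commuting graph $\Gamma_G$ is the simple graph with vertex set $G\setminus Z(G)$ in which two distinct vertices $x,y$ are adjacent if and only if $xy\neq yx$. A graph is regular if all its vertices have the same degree, and irregular otherwise. *)

From mathcomp Require Import all_boot all_fingroup all_solvable.
Set Implicit Arguments. Unset Strict Implicit. Unset Printing Implicit Defensive.
Local Open Scope group_scope.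

Definition ncg_vert (gT : finGroupType) (G : {group gT}) : {set gT} :=
  G :\: 'Z(G).

(* Adjacency: distinct vertices x, y with xy <> yx (distinctness is
   automatic, since x commutes with itself). *)
Definition ncg_adj (gT : finGroupType) (G : {group gT}) (x y : gT) : bool :=
  [&& x \in ncg_vert G, y \in ncg_vert G, x != y & x * y != y * x].

Definition ncg_deg (gT : finGroupType) (G : {group gT}) (x : gT) : nat :=
  #|[set y in ncg_vert G | ncg_adj G x y]|.

Definition ncg_regular (gT : finGroupType) (G : {group gT}) : Prop :=
  {in ncg_vert G &, forall x y, ncg_deg G x = ncg_deg G y}.

Definition ncg_irregular (gT : finGroupType) (G : {group gT}) : Prop :=
  ~ ncg_regular G.

Definition ncg_iso (gT hT : finGroupType) (G : {group gT}) (H : {group hT})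
  : Prop :=
  exists f : gT -> hT,
    [/\ {in ncg_vert G &, injective f},
        f @: ncg_vert G = ncg_vert H &
        {in ncg_vert G &, forall x y, ncg_adj H (f x) (f y) = ncg_adj G x y}].

(* The graph determines the numbers |G| - |Z(G)| (vertex count) and
   |G| - |C_G(x)| (degree of the vertex x).  In G every subgroup containing
   Z(G) >= A has order |A| p^e, so all these numbers are differences
   |A| p^e2 - |A| p^e1, whose p-adic valuation is the smaller exponent.
   - If X is abelian, H has the same shape with |X| in place of |A|;
     comparing valuations of the vertex count and of one degree forces
     |G| = |H| (lemma ncg_iso_cofactor_card).
   - If X is not abelian, the vertices h1 h2, h1 and h2 of H (h1, h2
     non-central in P1, X) have degrees whose valuations cannot all match
     such differences (lemma ncg_iso_dprod_abelian), a contradiction. *)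

From mathcomp Require Import all_boot all_fingroup all_solvable.
From mathcomp Require Import zify.
Set Implicit Arguments. Unset Strict Implicit. Unset Printing Implicit Defensive.

Section PadicDifferences.

Variable p : nat.
Hypothesis p_prime : prime p.

Lemma coprime_prime_gt0 c : coprime c p -> 0 < c.
Proof.
case: c => //; rewrite /coprime gcd0n => /eqP p1.
by move: p_prime; rewrite p1.
Qed.

Lemma ltn_mul_pow2l c e e' :
  coprime c p -> (c * p ^ e < c * p ^ e') = (e < e').
Proof.
by move=> c_p; rewrite ltn_pmul2l ?(coprime_prime_gt0 c_p) ?ltn_exp2l ?prime_gt1.
Qed.

(* The p-adic valuation of c p^e2 - c p^e1 = p^e1 c (p^(e2-e1) - 1). *)
Lemma logn_diff_pow c e1 e2 :
  coprime c p -> e1 < e2 -> logn p (c * p ^ e2 - c * p ^ e1) = e1.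
Proof.
move=> c_p lt_e12; have c_gt0 := coprime_prime_gt0 c_p.
have p_gt0 : 0 < p := prime_gt0 p_prime.
set m := e2 - e1; have m_gt0 : 0 < m by rewrite subn_gt0.
have q_gt0 : 0 < p ^ m - 1.
  by rewrite subn_gt0 -{1}(expn0 p) ltn_exp2l ?prime_gt1.
have q_p : coprime (p ^ m - 1) p.
  apply: coprime_dvdr (dvdn_exp m_gt0 (dvdnn p)) _.
  by rewrite subn1 coprimePn ?expn_gt0 ?p_gt0.
have -> : c * p ^ e2 - c * p ^ e1 = p ^ e1 * (c * (p ^ m - 1)).
  rewrite -(subnKC (ltnW lt_e12)) -/m expnD.
  by move: (p ^ e1) (p ^ m) => q r; nia.
rewrite lognM ?expn_gt0 ?p_gt0 ?muln_gt0 ?c_gt0 // pfactorK //.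
by rewrite logn_Gauss 1?coprime_sym // logn_coprime ?addn0 // coprime_sym.
Qed.

Lemma diff_pow_low_eq c d e1 e2 f1 f2 :
  coprime c p -> coprime d p -> f1 < f2 ->
  c * p ^ e2 - c * p ^ e1 = d * p ^ f2 - d * p ^ f1 -> e1 = f1.
Proof.
move=> c_p d_p lt_f12 eq_diff.
have lt_e12 : e1 < e2.
  have : 0 < d * p ^ f2 - d * p ^ f1 by rewrite subn_gt0 ltn_mul_pow2l.
  by rewrite -eq_diff subn_gt0 ltn_mul_pow2l.
by rewrite -(logn_diff_pow c_p lt_e12) eq_diff logn_diff_pow.
Qed.

(* Two chains Z < C < G and Z' < C' < G' of orders a p^k < a p^j < a p^n and
   b p^k' < b p^j' < b p^n' with equal gaps G - Z = G' - Z' and G - C = G' - C'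
   have equal tops: the gaps fix k = k' and j = j', then a = b. *)
Lemma cofactor_orders_eq a b k j n k' j' n' :
  coprime a p -> coprime b p -> k < j -> j < n -> k' < j' -> j' < n' ->
  a * p ^ n - a * p ^ k = b * p ^ n' - b * p ^ k' ->
  a * p ^ n - a * p ^ j = b * p ^ n' - b * p ^ j' ->
  a * p ^ n = b * p ^ n'.
Proof.
move=> a_p b_p lt_kj lt_jn lt_kj' lt_jn' eq_center eq_cent.
have ek := diff_pow_low_eq a_p b_p (ltn_trans lt_kj' lt_jn') eq_center.
have ej := diff_pow_low_eq a_p b_p lt_jn' eq_cent; subst k' j'.
have ltZCa : a * p ^ k < a * p ^ j by rewrite ltn_mul_pow2l.
have ltCGa : a * p ^ j < a * p ^ n by rewrite ltn_mul_pow2l.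
have ltZCb : b * p ^ k < b * p ^ j by rewrite ltn_mul_pow2l.
have ltCGb : b * p ^ j < b * p ^ n' by rewrite ltn_mul_pow2l.
have eq_ab : a = b.
  have gap_gt0 : 0 < p ^ j - p ^ k by rewrite subn_gt0 ltn_exp2l ?prime_gt1.
  apply/eqP; rewrite -(eqn_pmul2r gap_gt0) !mulnBr ![_ * (p ^ _)]mulnC.
  by apply/eqP; move: ltZCa ltCGa ltZCb ltCGb eq_center eq_cent; lia.
by subst b; move: ltCGa ltCGb eq_cent; lia.
Qed.

(* The degree pattern of P x X with X non-abelian (dprod_degree_pattern)
   cannot be realised by centralizers of orders a p^e: p-adic valuations force
   ja = jb = u, and then t p^u = b p^u contradicts t < b. *)
Lemma split_spectrum_mismatch a b t n m u ja jb jc :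
  coprime a p -> coprime b p -> coprime t p -> t < b -> u < m ->
  a * p ^ n - a * p ^ ja = p ^ m * b - p ^ u * t ->
  a * p ^ n - a * p ^ jb = p ^ m * b - p ^ u * b ->
  a * p ^ n - a * p ^ jc = p ^ m * b - p ^ m * t -> False.
Proof.
move=> a_p b_p t_p lt_tb lt_um eq_tu eq_bu eq_tm.
rewrite ![p ^ _ * _]mulnC in eq_tu eq_bu eq_tm.
have lt_tm : t * p ^ m < b * p ^ m by rewrite ltn_pmul2r ?expn_gt0 ?prime_gt0.
have lt_tum : t * p ^ u < t * p ^ m by rewrite ltn_mul_pow2l.
have lt_bum : b * p ^ u < b * p ^ m by rewrite ltn_mul_pow2l.
have eq_ja : ja = u.
  apply: (diff_pow_low_eq (e2 := jc) a_p t_p lt_um).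
  by move: lt_tm lt_tum eq_tu eq_tm; lia.
have eq_jb := diff_pow_low_eq a_p b_p lt_um eq_bu; subst ja jb.
have : t * p ^ u = b * p ^ u by move: lt_tum lt_tm lt_bum eq_tu eq_bu; lia.
move/eqP; rewrite eqn_pmul2r ?expn_gt0 ?prime_gt0 // => /eqP eq_tb.
by rewrite eq_tb ltnn in lt_tb.
Qed.

End PadicDifferences.

Local Open Scope group_scope.

Section NonCommutingGraph.

Variables (gT : finGroupType) (G : {group gT}).

Lemma ncg_vertE x : (x \in ncg_vert G) = (x \in G) && ('C_G[x] \proper G).
Proof.
rewrite in_setD andbC; case xG: (x \in G) => //=.
by rewrite properE subsetIl subsetIidl sub_cent1 /= [x \in 'Z(G)]inE xG.
Qed.

Lemma ncg_vert_card x : x \in G -> #|'C_G[x]| < #|G| -> x \in ncg_vert G.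
Proof. by move=> xG ltCG; rewrite ncg_vertE xG properEcard subsetIl. Qed.

Lemma ncg_vert_nonabelian : ~~ abelian G -> exists x, x \in ncg_vert G.
Proof.
move=> nabG; have /properP[_ [x xG xZ]] : 'Z(G) \proper G.
  by rewrite properEneq center_sub andbT; apply: contra nabG => /eqP/center_idP.
by exists x; rewrite in_setD xZ.
Qed.

(* For a vertex x, Z(G) < C_G(x) < G: x lies in its centralizer. *)
Lemma ncg_vert_cent1 x :
  x \in ncg_vert G -> 'Z(G) \proper 'C_G[x] /\ 'C_G[x] \proper G.
Proof.
move=> xV; have /andP[xG properCG] := eqbLR (ncg_vertE x) xV.
split=> //; apply/properP; split.
  by apply/subsetP=> z /centerP[zG cGz]; rewrite inE zG; apply/cent1P/cGz.
by exists x; [rewrite inE xG cent1id | case/setDP: xV].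
Qed.

Lemma ncg_neighbours x :
  x \in ncg_vert G -> [set y in ncg_vert G | ncg_adj G x y] = G :\: 'C_G[x].
Proof.
move=> xV; apply/setP=> y.
rewrite [RHS]in_setD [y \in 'C_G[x]]in_setI cent1E [LHS]in_set /ncg_adj xV.
have [yG | nyG] := boolP (y \in G); last by rewrite andbF (ncg_vertE y) (negPf nyG).
have [_ | ncxy] := eqVneq (y * x) (x * y); first by rewrite !andbF.
have yV : y \in ncg_vert G.
  rewrite in_setD yG andbT; apply: contra ncxy => /centerP[_ cGy].
  by rewrite (cGy x) //; case/setDP: xV.
by rewrite yV /= andbT; apply: contraNneq ncxy => ->.
Qed.

Lemma ncg_degE x : x \in ncg_vert G -> ncg_deg G x = (#|G| - #|'C_G[x]|)%N.
Proof.
by move=> xV; rewrite /ncg_deg ncg_neighbours // cardsD (setIidPr (subsetIl _ _)).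
Qed.

Lemma card_ncg_vert : #|ncg_vert G| = (#|G| - #|'Z(G)|)%N.
Proof. by rewrite cardsD (setIidPr (center_sub G)). Qed.

Definition ncg_has_degree (d : nat) : Prop :=
  exists2 x, x \in ncg_vert G & ncg_deg G x = d.

End NonCommutingGraph.

Section GraphIsomorphism.

Variables (gT hT : finGroupType) (G : {group gT}) (H : {group hT}).

Lemma ncg_iso_invariants :
  ncg_iso G H ->
  #|ncg_vert G| = #|ncg_vert H| /\
  forall d, ncg_has_degree H d -> ncg_has_degree G d.
Proof.
case=> f [f_inj f_onto f_adj]; split; first by rewrite -f_onto card_in_imset.
move=> d [h]; rewrite -f_onto => /imsetP[x xV ->] <-; exists x => //.
rewrite /ncg_deg; have -> : [set y in ncg_vert H | ncg_adj H (f x) y] =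
                            f @: [set y in ncg_vert G | ncg_adj G x y].
  apply/setP=> z; apply/idP/imsetP.
    rewrite in_set -f_onto => /andP[/imsetP[y yV ->] adj].
    by exists y; rewrite // in_set yV -f_adj.
  case=> y; rewrite in_set => /andP[yV adj] ->.
  by rewrite in_set f_adj // adj -f_onto imset_f.
by rewrite card_in_imset //; apply: sub_in2 f_inj => y /setIdP[].
Qed.

End GraphIsomorphism.

Section DirectProducts.

Variable gT : finGroupType.
Implicit Types (P Q K X H C : {group gT}) (p : nat).

Lemma cent1_mulC (A : {set gT}) h1 h2 :
  A \subset 'C[h2] -> 'C_A[h1 * h2] = 'C_A[h1].
Proof.
move=> cAh2; apply/setP=> y; rewrite !in_setI.
case yA: (y \in A) => //=; have /cent1P cyh2 := subsetP cAh2 y yA.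
by rewrite !cent1E mulgA -(mulgA h1) -cyh2 mulgA (inj_eq (mulIg h2)).
Qed.

Lemma card_cent1_dprod P X H h1 h2 :
  P \x X = H -> h1 \in P -> h2 \in X ->
  #|'C_H[h1 * h2]| = (#|'C_P[h1]| * #|'C_X[h2]|)%N.
Proof.
move=> dH h1P h2X; have [_ defH cPX tiPX] := dprodP dH.
have [/normal_norm nPH /normal_norm nXH] := dprod_normal2 dH.
have hH : h1 * h2 \in H by rewrite -defH mem_mulg.
rewrite -defH -cent_set1 -subcent_TImulg //; last first.
  by rewrite sub1set inE (subsetP nPH) ?(subsetP nXH).
rewrite TI_cardMg; last first.
  by apply/trivgP; rewrite -tiPX setISS ?subsetIl.
have ch : commute h2 h1 := centsP cPX h2 h2X h1 h1P.
rewrite /= !cent_set1 cent1_mulC ?sub_cent1 ?(subsetP cPX) //.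
by rewrite -ch cent1_mulC // sub_cent1 (subsetP _ h1 h1P) // centsC.
Qed.

(* The degrees of the non-commuting graph of P x X, with P a non-abelian
   p-group and X a non-abelian p'-group, include |X| p^m - t p^u,
   |X| p^m - |X| p^u and |X| p^m - t p^m for some t < |X| prime to p and
   u < m: they are realised by h1 h2, h1 and h2 for non-central h1 in P and
   h2 in X, with p^u = |C_P(h1)|, t = |C_X(h2)| and p^m = |P|. *)
Lemma dprod_degree_pattern p P X H :
  prime p -> P \x X = H -> p.-group P -> ~~ abelian P -> ~~ abelian X ->
  coprime p #|X| ->
  exists t u m, [/\ coprime t p, t < #|X|, u < m &
    [/\ ncg_has_degree H (p ^ m * #|X| - p ^ u * t),
        ncg_has_degree H (p ^ m * #|X| - p ^ u * #|X|) &
        ncg_has_degree H (p ^ m * #|X| - p ^ m * t)]]%N.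
Proof.
move=> p_prime dH pP nabP nabX p_X.
have [h1 /[dup] h1V /setDP[h1P _]] := ncg_vert_nonabelian nabP.
have [h2 /[dup] h2V /setDP[h2X _]] := ncg_vert_nonabelian nabX.
have [_ /proper_card ltCP] := ncg_vert_cent1 h1V.
have [_ /proper_card ltCX] := ncg_vert_cent1 h2V.
have [PH XH] : P \subset H /\ X \subset H.
  by have [_ <- _ _] := dprodP dH; rewrite mulG_subl mulG_subr.
set u := logn p #|'C_P[h1]|; set m := logn p #|P|.
have eCP : #|'C_P[h1]| = (p ^ u)%N by rewrite -card_pgroup // (pgroupS (subsetIl _ _)).
have eP : #|P| = (p ^ m)%N by rewrite -card_pgroup.
have CX1 : #|'C_X[1]| = #|X| by rewrite cent11T setIT.
have CP1 : #|'C_P[1]| = #|P| by rewrite cent11T setIT.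
have H_deg y1 y2 : y1 \in P -> y2 \in X ->
    (#|'C_P[y1]| * #|'C_X[y2]| < #|P| * #|X|)%N ->
    ncg_has_degree H (#|P| * #|X| - #|'C_P[y1]| * #|'C_X[y2]|)%N.
  move=> y1P y2X; rewrite -(card_cent1_dprod dH) // (dprod_card dH) => ltCH.
  have yV : y1 * y2 \in ncg_vert H.
    by apply: ncg_vert_card ltCH; exact: groupM (subsetP PH _ y1P) (subsetP XH _ y2X).
  by exists (y1 * y2); rewrite // ncg_degE.
exists #|'C_X[h2]|, u, m; split.
- by rewrite coprime_sym (coprime_dvdr (cardSg (subsetIl _ _))).
- exact: ltCX.
- by rewrite -(ltn_exp2l _ _ (prime_gt1 p_prime)) -eCP -eP.
have X_gt0 := cardG_gt0 X; have P_gt0 := cardG_gt0 P.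
rewrite -eCP -eP; split.
- exact: H_deg h1P h2X (ltn_mul ltCP ltCX).
- by rewrite -{2}CX1; apply: (H_deg _ _ h1P (group1 X)); rewrite CX1 ltn_pmul2r.
- by rewrite -{2}CP1; apply: (H_deg _ _ (group1 P) h2X); rewrite CP1 ltn_pmul2l.
Qed.

Definition cofactor_above_center p c H : Prop :=
  forall C, 'Z(H) \subset C -> C \subset H -> exists e, #|C| = (c * p ^ e)%N.

(* This holds for Q x K with Q a p-group and K abelian, with c = |K|:
   K <= Z(H) <= C, and |C : K| divides |H : K| = |Q|. *)
Lemma dprod_cofactor p Q K H :
  p.-group Q -> Q \x K = H -> abelian K -> cofactor_above_center p #|K| H.
Proof.
move=> pQ dH cKK C sZC sCH.
have sKC : K \subset C.
  have [_ defZ _ _] := dprodP (center_dprod dH).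
  by rewrite -(center_idP cKK) (subset_trans _ sZC) // -defZ mulG_subr.
have /p_natP[e eCK] : p.-nat #|C : K|.
  by apply: pnat_dvd pQ; rewrite (index_sdprod (dprodWsdC dH)) indexSg.
by exists e; rewrite -eCK Lagrange.
Qed.

End DirectProducts.

Section SpectrumComparison.

Variables (gT hT : finGroupType) (p : nat) (G : {group gT}).
Hypothesis p_prime : prime p.

(* Groups with cofactors a, b prime to p above their centers and isomorphic
   non-commuting graphs (H non-abelian) have the same order: compare the
   vertex count and the degree of one vertex. *)
Lemma ncg_iso_cofactor_card a b (H : {group hT}) :
  coprime a p -> coprime b p ->
  cofactor_above_center p a G -> cofactor_above_center p b H ->
  ~~ abelian H -> ncg_iso G H -> #|G| = #|H|.
Proof.
move=> a_p b_p cofG cofH nabH isoGH.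
have [eq_vert iso_deg] := ncg_iso_invariants isoGH.
have [h hV] := ncg_vert_nonabelian nabH.
have [x xV] := iso_deg _ (ex_intro2 _ _ h hV erefl).
rewrite !card_ncg_vert in eq_vert; rewrite !ncg_degE // => eq_deg.
have [ZCx CxG] := ncg_vert_cent1 xV; have [ZCh ChH] := ncg_vert_cent1 hV.
have [k eZG] := cofG _ (subxx _) (center_sub G).
have [j eCx] := cofG _ (proper_sub ZCx) (subsetIl _ _).
have [n eG] := cofG _ (center_sub G) (subxx G).
have [k' eZH] := cofH _ (subxx _) (center_sub H).
have [j' eCh] := cofH _ (proper_sub ZCh) (subsetIl _ _).
have [n' eH] := cofH _ (center_sub H) (subxx H).
move: (proper_card ZCx) (proper_card CxG) (proper_card ZCh) (proper_card ChH).
rewrite eZG eCx eG eZH eCh eH !ltn_mul_pow2l // in eq_vert eq_deg * => *.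
exact: cofactor_orders_eq eq_vert eq_deg.
Qed.

Lemma ncg_iso_dprod_abelian a (H P X : {group hT}) :
  coprime a p -> cofactor_above_center p a G ->
  P \x X = H -> p.-group P -> ~~ abelian P -> coprime p #|X| ->
  ncg_iso G H -> abelian X.
Proof.
move=> a_p cofG dH pP nabP p_X isoGH; apply: contraT => nabX.
have [_ iso_deg] := ncg_iso_invariants isoGH.
have [n eG] := cofG _ (center_sub G) (subxx G).
have G_deg d : ncg_has_degree H d -> exists j, (a * p ^ n - a * p ^ j = d)%N.
  case/iso_deg=> x xV <-; have [ZCx _] := ncg_vert_cent1 xV.
  have [j eCx] := cofG _ (proper_sub ZCx) (subsetIl _ _).
  by exists j; rewrite ncg_degE // eG eCx.
have [t [u [m [t_p lt_tX lt_um]]]] := dprod_degree_pattern p_prime dH pP nabP nabX p_X.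
case=> /G_deg[ja eq_tu] /G_deg[jb eq_Xu] /G_deg[jc eq_tm].
have X_p : coprime #|X| p by rewrite coprime_sym.
by case: (split_spectrum_mismatch p_prime a_p X_p t_p lt_tX lt_um eq_tu eq_Xu eq_tm).
Qed.

End SpectrumComparison.

Theorem mainTheorem6 (p : nat) (gT hT : finGroupType)
  (G P A : {group gT}) (H P1 X : {group hT}) :
  prime p ->
  P \x A = G -> p.-group P -> ~~ abelian P ->
  abelian A -> A :!=: 1 -> coprime #|A| p ->
  P1 \x X = H -> nilpotent H -> p.-group P1 -> ~~ abelian P1 ->
  coprime p #|X| ->
  ncg_irregular G -> ncg_irregular H -> ncg_iso G H ->
  #|G| = #|H|.
Proof.
move=> p_prime dG pP _ cAA _ A_p dH _ pP1 nabP1 p_X _ _ isoGH.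
have cofG := dprod_cofactor pP dG cAA.
have cXX := ncg_iso_dprod_abelian p_prime A_p cofG dH pP1 nabP1 p_X isoGH.
have nabH : ~~ abelian H.
  by apply: contra nabP1; apply: abelianS; rewrite -(dprodW dH) mulG_subl.
have X_p : coprime #|X| p by rewrite coprime_sym.
have cofH := dprod_cofactor pP1 dH cXX.
exact: (ncg_iso_cofactor_card p_prime A_p X_p cofG cofH nabH isoGH).
Qed.
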